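(* Let $g\in\mathbb{I}_{\geq1}$, $c\in\mathbb{I}_{\geq g}$, $b\in\mathbb{I}_{\geq c}$ be integers with $q:=\lceil c/g\rceil\geq2$ and $(q-1)g\leq b$, and let $\psi>0$, $\ell_\beta(\beta):=\psi(b^2-\beta^2)$. Let $\mathbb{X}_p\subseteq\mathbb{R}^{n_p}$, $\mathbb{U}_p\subseteq\mathbb{R}^{m_p}$ be closed sets containing the origin, $f_p:\mathbb{R}^{n_p}\times\mathbb{R}^{m_p}\to\mathbb{R}^{n_p}$ with $f_p(0,0)=0$, $\mathbb{X}_{f,p}\subseteq\mathbb{X}_p$, and $k_p:\mathbb{X}_{f,p}\to\mathbb{U}_p$. Consider the system $x^+=f(x,u)$ with state $x=(x_p,u_s,\beta)$, input $u=(u_c,\gamma,\delta)$, $\gamma,\delta\in\{0,1\}$, $\gamma+\delta\leq 1$, $$f(x,u)=\big(f_p(x_p,(\gamma+\delta)u_c+(1-\gamma-\delta)u_s),\ (\gamma+\delta)u_c+(1-\gamma-\delta)u_s,\ \min\{\beta+(1-\delta)g-\gamma c,\,b\}\big),$$ the terminal control sequence $\kappa_0(x):=(k_p(x_p),0,1)$, $\kappa_j(x):=(0,0,0)$ for $j\in\mathbb{I}_{[1,q-1]}$, $f_0(x):=x$, $f_i(x):=f(f_{i-1}(x),\kappa_{(i-1)\bmod q}(f_{i-1}(x)))$, and let $f_{\beta,i}(x)$ be the last component of $f_i(x)$. Then for every $x\in\mathbb{X}_{f,p}\times\mathbb{U}_p\times\{0\}$, $$\sum_{i=0}^{q-1}\ell_\beta(f_{\beta,i}(x))=\psi\Big(qb^2-\tfrac16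 g^2(q-1)(q-2)(2q-3)\Big).$$
   Context: $\mathbb{I}$ denotes the integers, $\mathbb{I}_{[a,b]}:=\mathbb{I}\cap[a,b]$, $\mathbb{I}_{\geq a}:=\mathbb{I}\cap[a,\infty)$. The component $\beta$ is a token bucket level; $\gamma=1$ is a token-consuming transmission and $\delta=1$ a transmission over a direct link that consumes no tokens and during which no tokens are added. *)

From HB Require Import structures.
From mathcomp Require Import all_boot all_order all_algebra.
From mathcomp Require Import all_classical all_reals all_analysis.
Set Implicit Arguments. Unset Strict Implicit. Unset Printing Implicit Defensive.
Import Order.TTheory GRing.Theory Num.Theory.
Import numFieldNormedType.Exports.
Local Open Scope ring_scope.

Section Sys.
Variables (R : realType) (np mp : nat).
Variable fp : 'rV[R]_np -> 'rV[R]_mp -> 'rV[R]_np.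
Variable kp : 'rV[R]_np -> 'rV[R]_mp.
Variables (g c b : int).

Definition state := ('rV[R]_np * 'rV[R]_mp * int)%type.
Definition input := ('rV[R]_mp * int * int)%type.

Definition sys_f (x : state) (u : input) : state :=
  let: (xp, us, beta) := x in
  let: (uc, gam, del) := u in
  let uapp := (gam + del)%:~R *: uc + (1 - gam - del)%:~R *: us in
  (fp xp uapp, uapp, Order.min (beta + (1 - del) * g - gam * c) b).

Definition qq : nat := `| Num.ceil ((c%:~R : R) / g%:~R) |%N.

Definition kappa (j : nat) (x : state) : input :=
  if j == 0%N then (kp x.1.1, 0, 1) else (0, 0, 0).

Fixpoint traj (i : nat) (x : state) : state :=
  match i with
  | 0%N => x
  | i'.+1 => let y := traj i' x in sys_f y (kappa (i' %% qq) y)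
  end.

Definition fbeta (i : nat) (x : state) : int := (traj i x).2.

Definition ell_beta (psi : R) (beta : int) : R :=
  psi * ((b%:~R) ^+ 2 - (beta%:~R) ^+ 2).
End Sys.

(** The token level evolves independently of the plant, so none of the hypotheses
    on [Xp], [Up], [fp] or [kp] matter.  From an empty bucket the terminal sequence
    first transmits over the direct link (no tokens added) and then stays idle, so
    the level after step [i <= q] is [(i - 1) g]; the bound [(q - 1) g <= b] keeps
    the saturation at [b] inactive.  The stage costs are [psi (b^2 - (i - 1)^2 g^2)],
    and the closed form is the sum of the first [q - 2] squares. *)
From HB Require Import structures.
From mathcomp Require Import all_boot all_order all_algebra.
From mathcomp Require Import all_classical all_reals all_analysis.
From mathcomp Require Import ring zify.
Import Order.TTheory GRing.Theory Num.Theory.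
Import numFieldNormedType.Exports.
Set Implicit Arguments.
Unset Strict Implicit.
Local Open Scope classical_set_scope.
Local Open Scope ring_scope.

Lemma sum_sqr_nat (R : numFieldType) (m : nat) :
  \sum_(i < m) (i%:R : R) ^+ 2 = m%:R * (m%:R - 1) * (2 * m%:R - 1) / 6.
Proof.
elim: m => [|m IHm]; first by rewrite big_ord0 !mul0r.
rewrite big_ord_recr /= IHm -natr1.
by field.
Qed.

Lemma sum_ell_beta_pred_mul (R : realType) (b g : int) (psi : R) (q : nat) :
  (0 < q)%N ->
  \sum_(i < q) ell_beta b psi ((i.-1)%:Z * g) =
  psi * (q%:R * (b%:~R) ^+ 2
         - (g%:~R) ^+ 2 * (q%:R - 1) * (q%:R - 2) * (2 * q%:R - 3) / 6).
Proof.
case: q => [//|m] _.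
rewrite big_ord_recl /ell_beta -mulr_sumr -mulrDr; congr (psi * _).
rewrite sumrB sumr_const card_ord.
under eq_bigr => i _ do rewrite lift0 /= intrM exprMn mulrC.
rewrite -mulr_sumr sum_sqr_nat -natr1 /= mul0r expr0n /=.
by field.
Qed.

Section TokenLevel.
Variables (R : realType) (np mp : nat).
Variables (fp : 'rV[R]_np -> 'rV[R]_mp -> 'rV[R]_np) (kp : 'rV[R]_np -> 'rV[R]_mp).
Variables (g c b : int).
Local Notation q := (qq R g c).

Lemma sys_f_beta (x : state R np mp) (u : input R mp) :
  (sys_f fp g c b x u).2 = Order.min (x.2 + (1 - u.2) * g - u.1.2 * c) b.
Proof. by case: x => [[? ?] ?]; case: u => [[? ?] ?]. Qed.

Hypotheses (g_ge0 : 0 <= g) (qg_le_b : (q%:Z - 1) * g <= b).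

Lemma fbeta_from_empty (x : state R np mp) (i : nat) :
  x.2 = 0 -> (i <= q)%N -> fbeta fp kp g c b i x = (i.-1)%:Z * g.
Proof.
move=> x2; elim: i => [_|i IHi lt_iq]; first by rewrite mul0r.
rewrite /fbeta /= sys_f_beta modn_small // /kappa.
case: eqP => [-> | /eqP i_neq0] /=.
  rewrite x2 subrr !mul0r !subr0; apply/min_idPl.
  by apply: le_trans qg_le_b; apply: mulr_ge0 => //; lia.
rewrite -/(fbeta fp kp g c b i x) IHi 1?ltnW // subr0 mul1r mul0r subr0.
have -> : i.-1%:Z * g + g = i%:Z * g by rewrite -{2}(mul1r g) -mulrDl; congr (_ * _); lia.
by apply/min_idPl; apply: le_trans qg_le_b; apply: ler_wpM2r; lia.
Qed.

End TokenLevel.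

Theorem lemma4 (R : realType) (np mp : nat)
  (Xp Xfp : set 'rV[R]_np) (Up : set 'rV[R]_mp)
  (fp : 'rV[R]_np -> 'rV[R]_mp -> 'rV[R]_np) (kp : 'rV[R]_np -> 'rV[R]_mp)
  (g c b : int) (psi : R) :
  (1 <= g)%R -> (g <= c)%R -> (c <= b)%R ->
  (2 <= qq R g c)%N -> ((qq R g c)%:Z - 1) * g <= b ->
  0 < psi ->
  closed Xp -> closed Up -> Xp 0 -> Up 0 ->
  fp 0 0 = 0 ->
  Xfp `<=` Xp ->
  (forall x, Xfp x -> Up (kp x)) ->
  forall (xp : 'rV[R]_np) (us : 'rV[R]_mp), Xfp xp -> Up us ->
  let q := qq R g c in
  \sum_(i < q) ell_beta b psi (fbeta fp kp g c b i (xp, us, 0%Z)) =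
  psi * (q%:R * (b%:~R) ^+ 2
         - (g%:~R) ^+ 2 * (q%:R - 1) * (q%:R - 2) * (2 * q%:R - 3) / 6).
Proof.
move=> g_ge1 _ _ q_ge2 qg_le_b _ _ _ _ _ _ _ _ xp us _ _ q.
have g_ge0 : 0 <= g by lia.
have beta_i (i : 'I_q) : fbeta fp kp g c b i (xp, us, 0%Z) = (i.-1)%:Z * g.
  by apply: (fbeta_from_empty fp kp g_ge0 qg_le_b) => //; apply: ltnW.
under eq_bigr => i _ do rewrite beta_i.
exact/sum_ell_beta_pred_mul/ltnW.
Qed.
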